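(* Let $s\ge4$, $d=s-3$, $V=\mathbb{F}_2^s$, and let $\mathbf b_{12},\mathbf b_{13},\mathbf b_{23}\in\mathbb{F}_2^d$ (with $\mathbf b_{ji}:=\mathbf b_{ij}$, $\mathbf b_{ii}:=\mathbf 0$) be such that the symmetric zero-diagonal matrix $\Theta=(\mathbf b_{ij})_{1\le i,j\le3}$ has no nontrivial $\mathbb{F}_2$-linear combination of its columns equal to zero. Let $\circ$ be the operation on $V$ $$x\circ y=x+y+\Big(0,0,0,\sum_{1\le i<j\le3}(x_iy_j+x_jy_i)\mathbf b_{ij}\Big).$$ Let $\lambda\in\mathbb{F}_2^{s\times s}$ (acting on row vectors by $x\mapsto x\lambda$). Then $\lambda\in H_\circ$ if and only if $$\lambda=\begin{pmatrix}A&B\\ 0_{d,3}&D\end{pmatrix}$$ for some $A\in\mathrm{GL}(\mathbb{F}_2^3)$, $D\in\mathrm{GL}(\mathbb{F}_2^d)$ and $B\in\mathbb{F}_2^{3\times d}$ satisfying, for all $1\le i<j\le3$, the compatibility equations $$\mathbf b_{ij}D=\sum_{1\le k_1<k_2\le3}\big(A_{ik_1}A_{jk_2}+A_{ik_2}A_{jk_1}\big)\mathbf b_{k_1k_2},$$ where $A_{kl}$ denotes the $(k,l)$ entry of $A$.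
   Context: The operation $\circ$ is an alternative operation on $V$ (its translations $x\mapsto x\circ a$ form an elementary abelian regular group of xor-affine maps) with weak key space $\{k: x\circ k=x+k\ \forall x\}$ equal to the span of the last $d$ canonical vectors. $H_\circ$ is the group of maps $f\in\mathrm{GL}(V,+)$ with $(a\circ b)f=af\circ bf$ for all $a,b\in V$ (postfix notation). Vectors $\mathbf b_{ij}$ are row vectors, so $\mathbf b_{ij}D$ is a vector-matrix product. *)

From HB Require Import structures.
From mathcomp Require Import all_boot all_order all_algebra all_fingroup.
Set Implicit Arguments. Unset Strict Implicit. Unset Printing Implicit Defensive.
Import GRing.Theory.
Local Open Scope ring_scope.

(* The symmetric zero-diagonal "matrix" Theta = (b_ij), indices 0,1,2 for 1,2,3. *)
Definition bmat (d : nat) (b12 b13 b23 : 'rV['F_2]_d) (i j : 'I_3) : 'rV['F_2]_d :=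
  match nat_of_ord i, nat_of_ord j with
  | 0, 1 | 1, 0 => b12
  | 0, 2 | 2, 0 => b13
  | 1, 2 | 2, 1 => b23
  | _, _ => 0
  end.

Definition cols_independent (d : nat) (b : 'I_3 -> 'I_3 -> 'rV['F_2]_d) : Prop :=
  forall c : 'I_3 -> 'F_2,
    (forall i : 'I_3, \sum_(j < 3) c j *: b i j = 0) -> forall j, c j = 0.

Definition circ (d : nat) (b : 'I_3 -> 'I_3 -> 'rV['F_2]_d)
    (x y : 'rV['F_2]_(3 + d)) : 'rV['F_2]_(3 + d) :=
  x + y + row_mx (0 : 'rV['F_2]_3)
    (\sum_(i < 3) \sum_(j < 3 | (i < j)%N)
        (x 0 (lshift d i) * y 0 (lshift d j) + x 0 (lshift d j) * y 0 (lshift d i)) *: b i j).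

Definition in_H (n : nat) (op : 'rV['F_2]_n -> 'rV['F_2]_n -> 'rV['F_2]_n)
    (lam : 'M['F_2]_n) : Prop :=
  lam \in unitmx /\ forall a b : 'rV['F_2]_n, op a b *m lam = op (a *m lam) (b *m lam).

(* The correction term of x o y is Q(x, y), where Q is the symmetric alternating
   F_2^d-valued bilinear form on F_2^3 with Q(e_i, e_j) = b_ij, evaluated on the
   first three coordinates and placed in the last d.  For lam = [A B; C D] the
   homomorphism condition reads Q(x, y) C = 0 and Q(x, y) D = Q(x', y'), where x'
   is the first block of x lam.  Taking x = (0, w) and letting y lam run over all
   vectors (lam is invertible) gives Q(wC, -) = 0, so wC = 0 because Q is
   nondegenerate (the column condition on Theta): C = 0.  Then the condition is
   Q(u, v) D = Q(uA, vA), which by bilinearity need only be checked on basis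
   vectors, and since Q is symmetric and alternating only on pairs i < j. *)

From HB Require Import structures.
From mathcomp Require Import all_boot all_order all_algebra all_fingroup.
Import GRing.Theory.
Local Open Scope ring_scope.
Set Implicit Arguments. Unset Strict Implicit. Unset Printing Implicit Defensive.

Lemma sum_ltn_pairs (V : nmodType) n (F : 'I_n -> 'I_n -> V) :
  (forall i, F i i = 0) ->
  \sum_(i < n) \sum_(j < n | (i < j)%N) (F i j + F j i) =
  \sum_(i < n) \sum_(j < n) F i j.
Proof.
move=> F0; have lower : \sum_(i < n) \sum_(j < n | (j < i)%N) F i j =
    \sum_(i < n) \sum_(j < n | (i < j)%N) F j i.
  under eq_bigr do rewrite big_mkcond.
  by rewrite exchange_big; under eq_bigr do rewrite -big_mkcond.
under eq_bigr do rewrite big_split /=.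
rewrite big_split /= -lower -big_split; apply: eq_bigr => i _.
rewrite [RHS](bigID (fun j : 'I_n => (i < j)%N)) /=; congr (_ + _).
rewrite [RHS](bigID (fun j : 'I_n => (j < i)%N)) /= [X in _ + X]big1 ?addr0.
  by apply: eq_bigl => j; rewrite -leqNgt andb_idl // => /ltnW.
by move=> j; rewrite -!leqNgt -eqn_leq => /eqP/val_inj ->.
Qed.

Section VectorForm.
Variables (R : comPzRingType) (n d : nat).
Implicit Types (b c : 'I_n -> 'I_n -> 'rV[R]_d) (u v : 'rV[R]_n).

Definition bform b u v : 'rV[R]_d :=
  \sum_(i < n) \sum_(j < n) (u 0 i * v 0 j) *: b i j.

Lemma eq_bform b c : (forall i j, b i j = c i j) -> bform b =2 bform c.
Proof. by move=> bc u v; apply: eq_bigr => i _; apply: eq_bigr => j _; rewrite bc. Qed.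

Lemma bform0l b v : bform b 0 v = 0.
Proof. by apply: big1 => i _; apply: big1 => j _; rewrite mxE mul0r scale0r. Qed.

Lemma bform_delta_r b u j : bform b u (delta_mx 0 j) = \sum_(i < n) u 0 i *: b i j.
Proof.
apply: eq_bigr => i _; rewrite (bigD1 j) //= big1 => [|k /negPf nkj].
  by rewrite !mxE !eqxx mulr1 addr0.
by rewrite !mxE nkj mulr0 scale0r.
Qed.

Lemma bform_delta b i j : bform b (delta_mx 0 i) (delta_mx 0 j) = b i j.
Proof.
rewrite bform_delta_r (bigD1 i) //= big1 => [|k /negPf nki].
  by rewrite !mxE !eqxx scale1r addr0.
by rewrite !mxE nki scale0r.
Qed.

Lemma bform_mulmxr b (D : 'M[R]_d) u v :
  bform b u v *m D = bform (fun i j => b i j *m D) u v.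
Proof.
rewrite /bform mulmx_suml; apply: eq_bigr => i _.
by rewrite mulmx_suml; apply: eq_bigr => j _; rewrite scalemxAl.
Qed.

Lemma bform_mulmx b (A : 'M[R]_n) u v :
  bform b (u *m A) (v *m A) = bform (fun i j => bform b (row i A) (row j A)) u v.
Proof.
have expand k l : ((u *m A) 0 k * (v *m A) 0 l) *: b k l =
    \sum_(i < n) \sum_(j < n) (u 0 i * v 0 j) *: ((A i k * A j l) *: b k l).
  rewrite !mxE big_distrlr scaler_suml; apply: eq_bigr => i _.
  by rewrite scaler_suml; apply: eq_bigr => j _; rewrite scalerA mulrACA.
rewrite /bform; under eq_bigr => k _ do
  (under eq_bigr => l _ do rewrite expand;
   rewrite exchange_big; under eq_bigr => i _ do rewrite exchange_big).
rewrite exchange_big; apply: eq_bigr => i _.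
rewrite exchange_big; apply: eq_bigr => j _.
rewrite scaler_sumr; apply: eq_bigr => k _.
by rewrite scaler_sumr; apply: eq_bigr => l _; rewrite !mxE.
Qed.

Lemma bform_mulmx_eq b (A : 'M[R]_n) (D : 'M[R]_d) :
  (forall u v, bform b u v *m D = bform b (u *m A) (v *m A)) <->
  (forall i j, b i j *m D = bform b (row i A) (row j A)).
Proof.
split=> [hom i j | bD u v]; first by rewrite -bform_delta hom -!rowE.
by rewrite bform_mulmxr bform_mulmx; apply: eq_bform.
Qed.

End VectorForm.

Section SymmetricForm.
Variables (R : comPzRingType) (n d : nat) (b : 'I_n -> 'I_n -> 'rV[R]_d).
Hypotheses (bC : forall i j, b i j = b j i) (b_diag : forall i, b i i = 0).
Implicit Types u v : 'rV[R]_n.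

Lemma bformC u v : bform b u v = bform b v u.
Proof.
rewrite /bform exchange_big; apply: eq_bigr => i _.
by apply: eq_bigr => j _; rewrite mulrC bC.
Qed.

Lemma bform_ltn u v :
  \sum_(i < n) \sum_(j < n | (i < j)%N) (u 0 i * v 0 j + u 0 j * v 0 i) *: b i j =
  bform b u v.
Proof.
rewrite /bform -sum_ltn_pairs => [|i]; last by rewrite b_diag scaler0.
by apply: eq_bigr => i _; apply: eq_bigr => j _; rewrite scalerDl [b j i]bC.
Qed.

End SymmetricForm.

Section AlternatingForm.
Variables (R : comNzRingType) (n d : nat) (b : 'I_n -> 'I_n -> 'rV[R]_d).
Hypotheses (pcharR2 : 2 \in [pchar R]).
Hypotheses (bC : forall i j, b i j = b j i) (b_diag : forall i, b i i = 0).
Implicit Types u v : 'rV[R]_n.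

Lemma bform_alt u : bform b u u = 0.
Proof.
rewrite -bform_ltn // big1 // => i _.
by rewrite big1 // => j _; rewrite [u 0 j * _]mulrC addrr_pchar2 ?scale0r.
Qed.

Lemma alt_bform_mulmx_eq (A : 'M[R]_n) (D : 'M[R]_d) :
  (forall u v, bform b u v *m D = bform b (u *m A) (v *m A)) <->
  (forall i j : 'I_n, (i < j)%N -> b i j *m D = bform b (row i A) (row j A)).
Proof.
apply: (iff_trans (bform_mulmx_eq _ _ _)); split=> [bD i j _ | bD i j]; first exact: bD.
case: (ltngtP i j) => [/bD // | /bD | /val_inj ->]; first by rewrite bC bformC.
by rewrite b_diag mul0mx bform_alt.
Qed.

End AlternatingForm.

Lemma unitmx_ublock (R : comUnitRingType) m n (A : 'M[R]_m) (B : 'M[R]_(m, n)) (D : 'M[R]_n) :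
  (block_mx A B 0 D \in unitmx) = (A \in unitmx) && (D \in unitmx).
Proof. by rewrite !unitmxE det_ublock unitrM. Qed.

Lemma lsubmx_mul_block (R : pzRingType) n1 n2 p1 p2 (x : 'rV[R]_(n1 + n2))
    (A : 'M[R]_(n1, p1)) (B : 'M_(n1, p2)) (C : 'M_(n2, p1)) (D : 'M_(n2, p2)) :
  lsubmx (x *m block_mx A B C D) = lsubmx x *m A + rsubmx x *m C.
Proof. by rewrite -{1}[x]hsubmxK mul_row_block row_mxKl. Qed.

Section AlternativeOperation.
Variables (d : nat) (b12 b13 b23 : 'rV['F_2]_d).
Local Notation b := (bmat b12 b13 b23).
Implicit Types (A : 'M['F_2]_3) (B : 'M['F_2]_(3, d)) (C : 'M['F_2]_(d, 3)).
Implicit Types (D : 'M['F_2]_d) (x y : 'rV['F_2]_(3 + d)).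

Lemma bmatC i j : b i j = b j i.
Proof. by case: i j => [[|[|[|//]]] ?] [[|[|[|//]]] ?]. Qed.

Lemma bmat_diag i : b i i = 0.
Proof. by case: i => [[|[|[|//]]] ?]. Qed.

Lemma bform_bmat_rows A i j :
  bform b (row i A) (row j A) =
  \sum_(k1 < 3) \sum_(k2 < 3 | (k1 < k2)%N)
     (A i k1 * A j k2 + A i k2 * A j k1) *: b k1 k2.
Proof.
rewrite -bform_ltn; [|exact: bmatC|exact: bmat_diag].
by apply: eq_bigr => k1 _; apply: eq_bigr => k2 _; rewrite !mxE.
Qed.

Lemma circE x y : circ b x y = x + y + row_mx 0 (bform b (lsubmx x) (lsubmx y)).
Proof.
rewrite /circ -bform_ltn; [|exact: bmatC|exact: bmat_diag].
by congr (_ + row_mx 0 _); apply: eq_bigr => i _; apply: eq_bigr => j _; rewrite !mxE.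
Qed.

Lemma bmat_nondegenerate : cols_independent b ->
  forall u : 'rV_3, (forall v, bform b u v = 0) -> u = 0.
Proof.
move=> hind u u_rad; apply/rowP => j; rewrite mxE; apply: (hind (u 0)) => i.
rewrite -[RHS](u_rad (delta_mx 0 i)) bform_delta_r.
by apply: eq_bigr => k _; rewrite bmatC.
Qed.

Lemma circ_mulmx_block A B C D x y :
  circ b x y *m block_mx A B C D =
    circ b (x *m block_mx A B C D) (y *m block_mx A B C D) <->
  bform b (lsubmx x) (lsubmx y) *m C = 0 /\
  bform b (lsubmx x) (lsubmx y) *m D =
    bform b (lsubmx (x *m block_mx A B C D)) (lsubmx (y *m block_mx A B C D)).
Proof.
rewrite !circE !mulmxDl mul_row_block !mul0mx !add0r.
by split=> [/addrI/eq_row_mx // | [-> ->]].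
Qed.

Lemma circ_hom_dlsubmx0 A B C D : cols_independent b ->
  block_mx A B C D \in unitmx ->
  (forall x y, circ b x y *m block_mx A B C D =
     circ b (x *m block_mx A B C D) (y *m block_mx A B C D)) ->
  C = 0.
Proof.
move=> hind unit_lam hom.
have wC0 (w : 'rV_d) : w *m C = 0.
  apply: (bmat_nondegenerate hind) => u.
  pose y := row_mx u 0 *m invmx (block_mx A B C D).
  have [_] := iffLR (circ_mulmx_block A B C D (row_mx 0 w) y) (hom _ _).
  rewrite row_mxKl bform0l mul0mx lsubmx_mul_block row_mxKl row_mxKr mul0mx.
  by rewrite add0r mulmxKV // row_mxKl.
by apply/row_matrixP => i; rewrite row0 rowE wC0.
Qed.

Lemma circ_hom_ublockP A B D :
  (forall x y, circ b x y *m block_mx A B 0 D =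
     circ b (x *m block_mx A B 0 D) (y *m block_mx A B 0 D)) <->
  (forall i j : 'I_3, (i < j)%N -> b i j *m D = bform b (row i A) (row j A)).
Proof.
have pchar2 : 2 \in [pchar 'F_2] by apply: pchar_Fp.
apply: (iff_trans _ (alt_bform_mulmx_eq pchar2 bmatC bmat_diag A D)).
split=> [hom u v | hom x y].
  have [_] := iffLR (circ_mulmx_block A B 0 D (row_mx u 0) (row_mx v 0)) (hom _ _).
  by rewrite !lsubmx_mul_block !row_mxKl !mulmx0 !addr0.
by apply/circ_mulmx_block; rewrite !lsubmx_mul_block !mulmx0 !addr0.
Qed.

End AlternativeOperation.

Theorem theorem6 (d : nat) (hd : (0 < d)%N) (b12 b13 b23 : 'rV['F_2]_d)
    (hind : cols_independent (bmat b12 b13 b23))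
    (lam : 'M['F_2]_(3 + d)) :
  in_H (circ (bmat b12 b13 b23)) lam <->
  exists (A : 'M['F_2]_3) (B : 'M['F_2]_(3, d)) (D : 'M['F_2]_d),
    [/\ A \in unitmx, D \in unitmx,
        lam = block_mx A B 0 D &
        forall i j : 'I_3, (i < j)%N ->
          bmat b12 b13 b23 i j *m D =
          \sum_(k1 < 3) \sum_(k2 < 3 | (k1 < k2)%N)
             (A i k1 * A j k2 + A i k2 * A j k1) *: bmat b12 b13 b23 k1 k2].
Proof.
split=> [[unit_lam hom] | [A [B [D [uA uD -> compat]]]]].
  have [A [B [C [D def_lam]]]] : exists A B C D, lam = block_mx A B C D.
    by exists (ulsubmx lam), (ursubmx lam), (dlsubmx lam), (drsubmx lam); rewrite submxK.
  subst lam; have C0 := circ_hom_dlsubmx0 hind unit_lam hom; subst C.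
  move: unit_lam; rewrite unitmx_ublock => /andP[uA uD].
  exists A, B, D; split=> // i j lt_ij; rewrite -bform_bmat_rows.
  exact: (iffLR (circ_hom_ublockP _ _ _ A B D) hom).
split; first by rewrite unitmx_ublock uA uD.
apply: (iffRL (circ_hom_ublockP _ _ _ A B D)) => i j lt_ij.
by rewrite bform_bmat_rows compat.
Qed.
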